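(* For all $n\ge0$, $$S_n(x)=\sum_{\nu=0}^{n}\binom{n}{\nu}\alpha_{\nu,n-\nu}\,x^{n-\nu},\qquad\text{i.e.}\quad s_{n,\nu}=\binom{n}{\nu}\alpha_{n-\nu,\nu}\ (0\le\nu\le n).$$ If (R) holds, then $S_n(x)=(-1)^nx^nS_n(x^{-1})$ and $s_{n,\nu}=(-1)^ns_{n,n-\nu}$ for $0\le\nu\le n$.
   Context: Let $(\alpha_n)_{n\ge0}$ be an arbitrary sequence of complex numbers with Appell polynomials $A_n(x)=\sum_{\nu=0}^{n}\binom{n}{\nu}\alpha_{n-\nu}x^\nu$. Let $s_{n,k}=\sum_{\nu=k}^{n}\binom{n}{\nu}\binom{\nu}{k}\alpha_\nu$ ($0\le k\le n$), $S_n(x)=\sum_{k=0}^n s_{n,k}x^k$, and $\alpha_{r,s}=\sum_{\nu=0}^{r}\binom{r}{\nu}\alpha_{s+\nu}$ for $r,s\ge0$. Property (R) means $A_n(1-x)=(-1)^nA_n(x)$ for all $n\ge0$. *)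

From HB Require Import structures.
From mathcomp Require Import all_boot all_order all_algebra.
From mathcomp Require Import complex.
From mathcomp Require Import reals.
Set Implicit Arguments. Unset Strict Implicit. Unset Printing Implicit Defensive.
Import Order.TTheory GRing.Theory Num.Theory.
Local Open Scope ring_scope.

Definition appellA (C : comRingType) (alpha : nat -> C) (n : nat) : {poly C} :=
  \sum_(nu < n.+1) ('C(n, nu)%:R * alpha (n - nu)%N)%:P * 'X^nu.

Definition sC (C : comRingType) (alpha : nat -> C) (n k : nat) : C :=
  \sum_(k <= nu < n.+1) ('C(n, nu) * 'C(nu, k))%:R * alpha nu.

Definition SP (C : comRingType) (alpha : nat -> C) (n : nat) : {poly C} :=
  \sum_(k < n.+1) (sC alpha n k)%:P * 'X^k.

Definition alpha2 (C : comRingType) (alpha : nat -> C) (r s : nat) : C :=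
  \sum_(nu < r.+1) 'C(r, nu)%:R * alpha (s + nu)%N.

Definition propR (C : comRingType) (alpha : nat -> C) : Prop :=
  forall (n : nat) (x : C), (appellA alpha n).[1 - x] = (-1) ^+ n * (appellA alpha n).[x].

From HB Require Import structures.
From mathcomp Require Import all_boot all_order all_algebra.
From mathcomp Require Import complex.
From mathcomp Require Import reals.
From mathcomp Require Import ring zify.
Import Order.TTheory GRing.Theory Num.Theory.
Local Open Scope ring_scope.

(* The closed forms for s_{n,k} and S_n follow from the "subset of a subset"
   identity C(n,v) C(v,k) = C(n,k) C(n-k,v-k): substituting v = k + j in the
   definition of s_{n,k} gives s_{n,k} = C(n,k) alpha_{n-k,k}, and reversing
   the summation index in S_n gives the stated expansion of S_n.
   For the reflection property write r_n(y) = sum_nu C(n,nu) alpha_nu y^nu.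
   Exchanging the two sums defining S_n and summing the binomial expansion
   gives S_n(x) = r_n(x + 1), while r_n(y) = y^n A_n(1/y) for y <> 0.  Since
   1/(1/x + 1) = 1 - 1/(x + 1), property (R) turns this into the reflection
   S_n(x) = (-1)^n x^n S_n(1/x) at every x <> 0, -1.  The right-hand side is
   the value at x of the polynomial with coefficients (-1)^n s_{n,n-k}; over a
   field of characteristic 0 two polynomials that agree at all positive
   integers are equal, which yields both the polynomial identity and the
   coefficient symmetry s_{n,k} = (-1)^n s_{n,n-k}. *)

(* Choosing a v-subset of an n-set and then a k-subset of it amounts to
   choosing the k-subset first and then v - k further elements. *)
Lemma bin_mul_bin (n v k : nat) : (k <= v)%N -> (v <= n)%N ->
  ('C(n, v) * 'C(v, k) = 'C(n, k) * 'C(n - k, v - k))%N.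
Proof.
move=> le_kv le_vn.
have fact_pos : (0 < k`! * (v - k)`! * (n - v)`!)%N by rewrite !muln_gt0 !fact_gt0.
apply/eqP; rewrite -(eqn_pmul2r fact_pos); apply/eqP.
have -> : ('C(n, v) * 'C(v, k) * (k`! * (v - k)`! * (n - v)`!) =
          'C(n, v) * ('C(v, k) * (k`! * (v - k)`!) * (n - v)`!))%N by ring.
have -> : ('C(n, k) * 'C(n - k, v - k) * (k`! * (v - k)`! * (n - v)`!) =
          'C(n, k) * (k`! * ('C(n - k, v - k) * ((v - k)`! * (n - v)`!))))%N by ring.
have sub_sub : (n - k - (v - k) = n - v)%N by lia.
rewrite (bin_fact le_kv) (bin_fact le_vn) -sub_sub bin_fact; last by lia.
rewrite bin_fact //; lia.
Qed.

Lemma sC_closed_form (C : comRingType) (alpha : nat -> C) (n k : nat) :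
  (k <= n)%N -> sC alpha n k = 'C(n, k)%:R * alpha2 alpha (n - k) k.
Proof.
move=> le_kn; rewrite /sC /alpha2 -{1}(add0n k) big_addn big_mkord.
have -> : (n.+1 - k = (n - k).+1)%N by lia.
rewrite mulr_sumr; apply: eq_bigr => j _.
have le_j : (j <= n - k)%N by rewrite -ltnS.
rewrite (@bin_mul_bin n (j + k) k (leq_addl _ _)); last by lia.
by rewrite addnK natrM mulrA addnC.
Qed.

Lemma SP_alpha2 (C : comRingType) (alpha : nat -> C) (n : nat) :
  SP alpha n =
  \sum_(nu < n.+1) ('C(n, nu)%:R * alpha2 alpha nu (n - nu))%:P * 'X^(n - nu).
Proof.
rewrite /SP (reindex_inj rev_ord_inj) /=; apply: eq_bigr => k _.
have le_kn : (k <= n)%N by rewrite -ltnS.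
by rewrite subSS sC_closed_form ?leq_subr // subKn // bin_sub.
Qed.

Lemma SP_polyE (C : comRingType) (alpha : nat -> C) (n : nat) :
  SP alpha n = \poly_(k < n.+1) sC alpha n k.
Proof. by rewrite poly_def; apply: eq_bigr => k _; rewrite mul_polyC. Qed.

Lemma poly_eq_on_pos_nat (C : numDomainType) (p q : {poly C}) :
  (forall m : nat, p.[m.+1%:R] = q.[m.+1%:R]) -> p = q.
Proof.
move=> eq_pq; apply/eqP; rewrite -subr_eq0; apply/eqP.
apply: (@roots_geq_poly_eq0 _ _ [seq m.+1%:R | m <- iota 0 (size (p - q))]).
- by apply/allP => _ /mapP[m _ ->]; rewrite /root hornerD hornerN eq_pq subrr.
- by rewrite map_inj_uniq ?iota_uniq // => a b /eqP; rewrite eqr_nat => /eqP[].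
- by rewrite size_map size_iota.
Qed.

Section Reflection.
Variables (C : fieldType) (alpha : nat -> C) (n : nat).

Definition recipA (y : C) : C :=
  \sum_(nu < n.+1) 'C(n, nu)%:R * alpha nu * y ^+ nu.

(* The polynomial whose value at x <> 0 is (-1)^n x^n S_n(1/x). *)
Definition reflSP : {poly C} :=
  \poly_(k < n.+1) ((-1) ^+ n * sC alpha n (n - k)).

Lemma sC_full_sum (k : nat) :
  sC alpha n k = \sum_(nu < n.+1) ('C(n, nu) * 'C(nu, k))%:R * alpha nu.
Proof.
rewrite /sC big_geq_mkord big_mkcond /=; apply: eq_bigr => nu _.
by case: leqP => // lt_nu_k; rewrite (bin_small lt_nu_k) muln0 mul0r.
Qed.

Lemma binomial_sum_widen (nu : nat) (x : C) : (nu <= n)%N ->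
  \sum_(k < n.+1) 'C(nu, k)%:R * x ^+ k = (x + 1) ^+ nu.
Proof.
move=> le_nu_n; rewrite exprD1n (big_ord_widen n.+1 (fun k => x ^+ k *+ 'C(nu, k)))
  // [RHS]big_mkcond /=; apply: eq_bigr => k _.
case: ltnP => [_ | lt_nu_k]; first by rewrite mulr_natl.
by rewrite (bin_small lt_nu_k) mul0r.
Qed.

Lemma SP_shift (x : C) : (SP alpha n).[x] = recipA (x + 1).
Proof.
rewrite /SP horner_sum.
under eq_bigr => k _ do rewrite hornerCM hornerXn sC_full_sum mulr_suml.
rewrite exchange_big /recipA; apply: eq_bigr => nu _.
rewrite -(@binomial_sum_widen nu x); last by rewrite -ltnS.
rewrite mulr_sumr; apply: eq_bigr => k _.
by rewrite natrM; ring.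
Qed.

Lemma recipA_appell (y : C) : y != 0 -> recipA y = y ^+ n * (appellA alpha n).[y^-1].
Proof.
move=> y0; rewrite /appellA horner_sum mulr_sumr (reindex_inj rev_ord_inj) /=.
apply: eq_bigr => k _.
have le_kn : (k <= n)%N by rewrite -ltnS.
have -> : y ^+ n = y ^+ k * y ^+ (n - k) by rewrite -exprD subnKC.
rewrite hornerCM hornerXn subSS subKn // bin_sub // exprVn.
by field; rewrite expf_neq0.
Qed.

Lemma SP_reflect_at (x : C) : propR alpha -> x != 0 -> x + 1 != 0 ->
  (SP alpha n).[x] = (-1) ^+ n * x ^+ n * (SP alpha n).[x^-1].
Proof.
move=> HR x0 x1.
have inv_shift : x^-1 + 1 = (x + 1) / x by field.
have inv_shift0 : x^-1 + 1 != 0 by rewrite inv_shift mulf_neq0 ?invr_eq0.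
have inv_inv_shift : (x^-1 + 1)^-1 = 1 - (x + 1)^-1.
  by rewrite inv_shift; field; rewrite x0 x1.
rewrite !SP_shift !recipA_appell // inv_inv_shift HR inv_shift exprMn exprVn.
rewrite -mulrA [x ^+ n * _]mulrA mulrCA signrMK [x ^+ n * _]mulrC.
by rewrite divfK // expf_neq0.
Qed.

Lemma horner_reflSP (x : C) : x != 0 ->
  reflSP.[x] = (-1) ^+ n * x ^+ n * (SP alpha n).[x^-1].
Proof.
move=> x0; rewrite /reflSP horner_poly /SP horner_sum mulr_sumr.
rewrite (reindex_inj rev_ord_inj) /=; apply: eq_bigr => k _.
have le_kn : (k <= n)%N by rewrite -ltnS.
have -> : x ^+ n = x ^+ (n - k) * x ^+ k by rewrite -exprD subnK.
rewrite hornerCM hornerXn subSS subKn // exprVn.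
by field; rewrite expf_neq0.
Qed.

End Reflection.

Arguments reflSP {C}.

Lemma SP_reflected {C : numFieldType} (alpha : nat -> C) (n : nat) :
  propR alpha -> SP alpha n = reflSP alpha n.
Proof.
move=> HR; apply: poly_eq_on_pos_nat => m.
have m0 : m.+1%:R != 0 :> C by rewrite pnatr_eq0.
have m1 : m.+1%:R + 1 != 0 :> C by rewrite natr1 pnatr_eq0.
by rewrite horner_reflSP //; apply: SP_reflect_at.
Qed.

Theorem mainTheorem9 (R : realType) (alpha : nat -> R[i]) :
  (forall n : nat,
     SP alpha n = \sum_(nu < n.+1) ('C(n, nu)%:R * alpha2 alpha nu (n - nu)%N)%:P * 'X^(n - nu)) /\
  (forall n nu : nat, (nu <= n)%N ->
     sC alpha n nu = 'C(n, nu)%:R * alpha2 alpha (n - nu)%N nu) /\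
  (propR alpha ->
     (forall (n : nat) (x : R[i]), x != 0 ->
        (SP alpha n).[x] = (-1) ^+ n * x ^+ n * (SP alpha n).[x^-1]) /\
     (forall n nu : nat, (nu <= n)%N ->
        sC alpha n nu = (-1) ^+ n * sC alpha n (n - nu)%N)).
Proof.
split; first exact: SP_alpha2.
split; first exact: sC_closed_form.
move=> HR; split=> [n x x0 | n nu le_nu_n].
  by rewrite {1}(SP_reflected alpha n HR) horner_reflSP.
have := congr1 (coefp nu) (SP_reflected alpha n HR).
by rewrite /= SP_polyE /reflSP !coef_poly ltnS le_nu_n.
Qed.
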